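(* Let $\mathbf{C}\in\mathbb{R}^{n\times n}$, let $\mathbf{X}=\mathbf{C}^\top\mathbf{C}$, and let $\Pi$ be any participation schema. For $\pi\in\Pi$, let $\mathbf{P}_\pi$ be the diagonal $0/1$ matrix with $\mathbf{P}_\pi[i,i]=1$ if and only if $i\in\pi$. Then the squared sensitivity satisfies $$\mathrm{sens}_\Pi(\mathbf{C})^2=\max_{\pi\in\Pi}\ \sup_{\mathbf{u}\in\mathfrak{D}}\ \mathrm{tr}\big([\mathbf{P}_\pi\mathbf{C}^\top\mathbf{C}\mathbf{P}_\pi][\mathbf{u}\mathbf{u}^\top]\big).$$ Moreover, since every $\mathbf{u}\in\mathfrak{D}$ has rows of $\ell_2$ norm at most $1$, $$\mathrm{sens}_\Pi(\mathbf{C})^2\le\max_{\pi\in\Pi}\sum_{i,j\in\pi}|\mathbf{X}_{[i,j]}|.$$ This upper bound holds with equality whenever $\mathbf{P}_\pi\mathbf{C}^\top\mathbf{C}\mathbf{P}_\pi$ is entrywise nonnegative for all $\pi\in\Pi$. These statements hold independently of the row dimension $d$.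
   Context: A participation schema $\Pi$ is a set of subsets $\pi\subseteq[n]=\{1,\dots,n\}$ (the sets of steps in which one example may participate). $\mathfrak{D}$ is the set of all $\mathbf{u}\in\mathbb{R}^{n\times d}$ whose rows have $\ell_2$ norm at most $1$ and whose nonzero-row indices are contained in some $\pi\in\Pi$. The sensitivity of $\mathbf{C}$ is $\mathrm{sens}_\Pi(\mathbf{C})=\sup_{\mathbf{u}\in\mathfrak{D}}\|\mathbf{C}\mathbf{u}\|_F$. *)

From HB Require Import structures.
From mathcomp Require Import all_boot all_order all_algebra.
From mathcomp Require Import classical_sets reals.
Set Implicit Arguments. Unset Strict Implicit. Unset Printing Implicit Defensive.
Import Order.TTheory GRing.Theory Num.Theory.
Local Open Scope ring_scope.
Local Open Scope classical_set_scope.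

Section Sensitivity.
Variable R : realType.


Definition l2norm (m : nat) (v : 'rV[R]_m) : R :=
  Num.sqrt (\sum_(j < m) v 0 j ^+ 2).

Definition frob (p q : nat) (A : 'M[R]_(p, q)) : R :=
  Num.sqrt (\sum_(i < p) \sum_(j < q) A i j ^+ 2).

Definition frakD (n d : nat) (Pi : {set {set 'I_n}}) : set 'M[R]_(n, d) :=
  [set u | (forall i : 'I_n, l2norm (row i u) <= 1) /\
           (exists2 pi, pi \in Pi & forall i : 'I_n, row i u != 0 -> i \in pi)].

Definition sens (n d : nat) (Pi : {set {set 'I_n}}) (C : 'M[R]_n) : R :=
  sup [set x | exists2 u, @frakD n d Pi u & x = frob (C *m u)].

Definition Pmx (n : nat) (pi : {set 'I_n}) : 'M[R]_n :=
  diag_mx (\row_(i < n) (i \in pi)%:R).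

End Sensitivity.
Arguments frakD {R} n d Pi.
Arguments sens {R} n d Pi C.
Arguments Pmx {R} n pi.

From HB Require Import structures.
From mathcomp Require Import all_boot all_order all_algebra.
From mathcomp Require Import classical_sets reals.
From mathcomp Require Import lra.
Import Order.TTheory GRing.Theory Num.Theory.
Local Open Scope ring_scope.
Local Open Scope classical_set_scope.

(** Writing [G = u u^T], the squared Frobenius norm [||C u||_F^2] is
    [tr (X G) = sum_(a,b) X_ab G_ba].  If the rows of [u] vanish outside [pi]
    then [u = P_pi u], so this is also [tr (P_pi X P_pi G)] and only the
    entries with [a, b] in [pi] contribute; projecting by [P_pi] keeps [u] in
    [D], which gives the first identity.  Rows of norm at most one give
    [|G_ab| <= 1] (AM-GM), hence the upper bound.  When [P_pi X P_pi >= 0]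
    entrywise, the matrix with a column of ones on [pi] has [G_ab = 1] on
    [pi x pi] and attains the bound. *)

Lemma ler_sqrt_of_sqr_le (R : rcfType) (x M : R) :
  0 <= x -> x ^+ 2 <= M -> x <= Num.sqrt M.
Proof.
by move=> x_ge0 le_xM; rewrite -[x]ger0_norm // -sqrtr_sqr ler_wsqrtr.
Qed.

Section SupSquare.
Local Set Implicit Arguments. Local Unset Strict Implicit.
Variables (R : realType) (T : Type) (D : set T) (f : T -> R).
Hypotheses (f_ge0 : forall u, 0 <= f u) (D_neq0 : D !=set0).
Hypothesis sqr_bounded : exists M, forall u, D u -> f u ^+ 2 <= M.

Lemma has_ubound_image : has_ubound [set x | exists2 v, D v & x = f v].
Proof.
have [M leM] := sqr_bounded; exists (Num.sqrt M) => _ [v Dv ->].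
by rewrite ler_sqrt_of_sqr_le ?leM.
Qed.

Lemma le_sup_image u : D u -> f u <= sup [set x | exists2 v, D v & x = f v].
Proof. by move=> Du; apply: ub_le_sup has_ubound_image _ _; exists u. Qed.

Lemma sqr_le_sup_sqr u :
  D u -> f u ^+ 2 <= sup [set x | exists2 v, D v & x = f v] ^+ 2.
Proof.
move=> Du; have le_fu := le_sup_image Du.
by rewrite ler_sqr ?nnegrE // (le_trans (f_ge0 u)).
Qed.

Lemma sup_sqr_le m :
  (forall u, D u -> f u ^+ 2 <= m) ->
  sup [set x | exists2 v, D v & x = f v] ^+ 2 <= m.
Proof.
move=> lem; have [u Du] := D_neq0.
have m_ge0 : 0 <= m by apply: le_trans (lem u Du); exact: sqr_ge0.
have sup_le : sup [set x | exists2 v, D v & x = f v] <= Num.sqrt m.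
  apply: ge_sup; first by exists (f u), u.
  by move=> _ [v Dv ->]; rewrite ler_sqrt_of_sqr_le ?lem.
rewrite -(sqr_sqrtr m_ge0) ler_sqr ?nnegrE ?sqrtr_ge0 //.
exact: le_trans (f_ge0 u) (le_sup_image Du).
Qed.

End SupSquare.

Section GramMatrix.
Local Set Implicit Arguments. Local Unset Strict Implicit.
Variable R : realType.

Definition rows_in n d (pi : {set 'I_n}) (u : 'M[R]_(n, d)) :=
  forall i, row i u != 0 -> i \in pi.

Lemma l2norm0 m : l2norm (0 : 'rV[R]_m) = 0.
Proof. by rewrite /l2norm big1 ?sqrtr0 // => k _; rewrite mxE expr0n. Qed.

Lemma frob_sqr p q (A : 'M[R]_(p, q)) : frob A ^+ 2 = \tr (A *m A^T).
Proof.
rewrite sqr_sqrtr; last by do 2![apply: sumr_ge0 => ? _]; exact: sqr_ge0.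
apply: eq_bigr => i _; rewrite !mxE.
by apply: eq_bigr => j _; rewrite mxE expr2.
Qed.

Lemma mulmx_trmxE n d (u : 'M[R]_(n, d)) a b :
  (u *m u^T) a b = \sum_k u a k * u b k.
Proof. by rewrite mxE; apply: eq_bigr => k _; rewrite mxE. Qed.

Lemma frob_mul_sqr m n d (C : 'M[R]_(m, n)) (u : 'M[R]_(n, d)) :
  frob (C *m u) ^+ 2 = \sum_a \sum_b (C^T *m C) a b * (u *m u^T) b a.
Proof.
rewrite frob_sqr trmx_mul !mulmxA mxtrace_mulC !mulmxA.
by apply: eq_bigr => a _; rewrite -mulmxA mxE.
Qed.

Lemma entry_eq0_notin n d (pi : {set 'I_n}) (u : 'M[R]_(n, d)) i k :
  rows_in pi u -> i \notin pi -> u i k = 0.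
Proof.
move=> supp_u; apply: contraNeq => uik_neq0; apply: supp_u.
by apply: contra_neq uik_neq0 => /rowP/(_ k); rewrite !mxE.
Qed.

Lemma frob_mul_sqr_supported m n d (pi : {set 'I_n}) (C : 'M[R]_(m, n))
    (u : 'M[R]_(n, d)) :
  rows_in pi u ->
  frob (C *m u) ^+ 2 =
    \sum_(a in pi) \sum_(b in pi) (C^T *m C) a b * (u *m u^T) b a.
Proof.
move=> supp_u; have gram_eq0 i j : i \notin pi -> (u *m u^T) i j = 0.
  by move=> i_notin; rewrite mulmx_trmxE big1 // => k _;
    rewrite (entry_eq0_notin k supp_u i_notin) mul0r.
have gram_sym i j : (u *m u^T) i j = (u *m u^T) j i.
  by rewrite !mulmx_trmxE; apply: eq_bigr => k _; rewrite mulrC.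
rewrite frob_mul_sqr [RHS]big_mkcond; apply: eq_bigr => a _.
case: ifP => [a_in | /negbT a_notin]; last first.
  by rewrite big1 // => b _; rewrite gram_sym gram_eq0 ?mulr0.
rewrite [RHS]big_mkcond; apply: eq_bigr => b _.
by case: ifP => // /negbT b_notin; rewrite gram_eq0 ?mulr0.
Qed.

Lemma abs_gram_le1 n d (u : 'M[R]_(n, d)) a b :
  (forall i, l2norm (row i u) <= 1) -> `|(u *m u^T) a b| <= 1.
Proof.
move=> row_le1; have sqr_le1 i : \sum_k u i k ^+ 2 <= 1.
  have := row_le1 i; rewrite /l2norm -[X in _ <= X]sqrtr1 ler_sqrt //.
  by under eq_bigr do rewrite mxE.
have amgm k : `|u a k * u b k| *+ 2 <= u a k ^+ 2 + u b k ^+ 2.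
  rewrite normrM -(real_normK (num_real (u a k))).
  by rewrite -(real_normK (num_real (u b k))) leif_mean_square_scaled.
have : \sum_k `|u a k * u b k| *+ 2 <= \sum_k (u a k ^+ 2 + u b k ^+ 2).
  by apply: ler_sum => k _; exact: amgm.
rewrite sumrMnl big_split /= mulmx_trmxE => sum_le.
have := ler_norm_sum _ _ _ : `|\sum_k u a k * u b k| <= \sum_k `|u a k * u b k|.
by have := sqr_le1 a; have := sqr_le1 b; lra.
Qed.

Lemma frob_mul_sqr_le_sum_abs m n d (pi : {set 'I_n}) (C : 'M[R]_(m, n))
    (u : 'M[R]_(n, d)) :
  (forall i, l2norm (row i u) <= 1) -> rows_in pi u ->
  frob (C *m u) ^+ 2 <= \sum_(a in pi) \sum_(b in pi) `|(C^T *m C) a b|.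
Proof.
move=> row_le1 supp_u; rewrite (frob_mul_sqr_supported C supp_u).
do 2![apply: ler_sum => ? _]; apply: le_trans (ler_norm _) _.
by rewrite normrM ler_piMr ?abs_gram_le1.
Qed.

End GramMatrix.

Section DiagonalProjection.
Local Set Implicit Arguments. Local Unset Strict Implicit.
Variable R : realType.

Lemma row_Pmx_mul n d (pi : {set 'I_n}) (u : 'M[R]_(n, d)) i :
  row i (Pmx n pi *m u) = if i \in pi then row i u else 0.
Proof.
apply/rowP => k; rewrite mul_diag_mx !mxE.
by case: (i \in pi); rewrite ?mul1r ?mul0r // !mxE.
Qed.

Lemma Pmx_mul_id n d (pi : {set 'I_n}) (u : 'M[R]_(n, d)) :
  rows_in pi u -> Pmx n pi *m u = u.
Proof.
move=> supp_u; apply/row_matrixP => i; rewrite row_Pmx_mul.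
by case: ifPn => // i_notin; apply/esym/eqP; exact: contraNT (supp_u i) i_notin.
Qed.

Lemma PXP_entry m n (pi : {set 'I_n}) (C : 'M[R]_(m, n)) a b :
  (Pmx n pi *m C^T *m C *m Pmx n pi) a b =
    (a \in pi)%:R * (C^T *m C) a b * (b \in pi)%:R.
Proof. by rewrite -(mulmxA (Pmx n pi)) mul_mx_diag mxE mul_diag_mx !mxE. Qed.

Lemma mxtrace_PXP_gram m n d (pi : {set 'I_n}) (C : 'M[R]_(m, n))
    (u : 'M[R]_(n, d)) :
  \tr ((Pmx n pi *m C^T *m C *m Pmx n pi) *m (u *m u^T)) =
    frob (C *m (Pmx n pi *m u)) ^+ 2.
Proof.
rewrite frob_sqr !trmx_mul tr_diag_mx !mulmxA.
by rewrite [RHS]mxtrace_mulC !mulmxA [RHS]mxtrace_mulC !mulmxA.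
Qed.

Lemma frakD_Pmx_mul n d (Pi : {set {set 'I_n}}) (pi : {set 'I_n})
    (u : 'M[R]_(n, d)) :
  frakD n d Pi u -> frakD n d Pi (Pmx n pi *m u).
Proof.
move=> [row_le1 [pi' pi'_in supp_u]]; split=> [i | ].
  by rewrite row_Pmx_mul; case: ifP; rewrite ?l2norm0.
exists pi' => // i; rewrite row_Pmx_mul.
by case: ifP => _; [exact: supp_u | rewrite eqxx].
Qed.

Definition indicator_mx n d (pi : {set 'I_n}) (k0 : 'I_d) : 'M[R]_(n, d) :=
  \matrix_(i, k) ((i \in pi) && (k == k0))%:R.

Lemma indicator_mx_gram n d (pi : {set 'I_n}) (k0 : 'I_d) a b :
  (indicator_mx pi k0 *m (indicator_mx pi k0)^T) a b =
    ((a \in pi) && (b \in pi))%:R.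
Proof.
rewrite mulmx_trmxE (bigD1 k0) //= big1 => [|k /negbTE k_neq]; last first.
  by rewrite !mxE k_neq andbF mul0r.
by rewrite !mxE eqxx !andbT addr0 -natrM mulnb.
Qed.

Lemma rows_in_indicator_mx n d (pi : {set 'I_n}) (k0 : 'I_d) :
  rows_in pi (indicator_mx pi k0).
Proof.
move=> i; apply: contraR => i_notin; apply/eqP/rowP => k.
by rewrite !mxE (negbTE i_notin).
Qed.

Lemma indicator_mx_in_frakD n d (Pi : {set {set 'I_n}}) pi (k0 : 'I_d) :
  pi \in Pi -> frakD n d Pi (indicator_mx pi k0).
Proof.
move=> pi_in; split=> [i | ]; last first.
  by exists pi => //; exact: rows_in_indicator_mx.
rewrite /l2norm -sqrtr1 ler_sqrt // (bigD1 k0) //= big1 => [|k /negbTE k_neq].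
  by rewrite !mxE eqxx andbT addr0; case: (i \in pi); rewrite ?expr1n ?expr0n.
by rewrite !mxE k_neq andbF expr0n.
Qed.

Lemma frob_mul_indicator_mx m n d (pi : {set 'I_n}) (k0 : 'I_d)
    (C : 'M[R]_(m, n)) :
  frob (C *m indicator_mx pi k0) ^+ 2 =
    \sum_(a in pi) \sum_(b in pi) (C^T *m C) a b.
Proof.
rewrite (frob_mul_sqr_supported (pi := pi)); last exact: rows_in_indicator_mx.
apply: eq_bigr => a a_in; apply: eq_bigr => b b_in.
by rewrite indicator_mx_gram a_in b_in mulr1.
Qed.

End DiagonalProjection.

Section Sensitivity.
Local Set Implicit Arguments. Local Unset Strict Implicit.
Variables (R : realType) (n d : nat) (C : 'M[R]_n) (Pi : {set {set 'I_n}}).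
Hypothesis Pi_neq0 : Pi != finset.set0.

Lemma frakD0 : frakD n d Pi (0 : 'M[R]_(n, d)).
Proof.
have [pi pi_in] := set0Pn _ Pi_neq0.
split=> [i | ]; first by rewrite row0 l2norm0.
by exists pi => // i; rewrite row0 eqxx.
Qed.

Lemma frob_mul_sqr_le_bigmax u : frakD n d Pi u ->
  frob (C *m u) ^+ 2 <=
    \big[Num.max/0]_(pi in Pi) \sum_(i in pi) \sum_(j in pi) `|(C^T *m C) i j|.
Proof.
move=> [row_le1 [pi pi_in supp_u]].
apply: le_trans (frob_mul_sqr_le_sum_abs C row_le1 supp_u) _.
exact: le_bigmax_cond pi_in.
Qed.

Lemma sens_sqr_ge u :
  frakD n d Pi u -> frob (C *m u) ^+ 2 <= sens n d Pi C ^+ 2.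
Proof.
apply: (sqr_le_sup_sqr (f := fun v => frob (C *m v))) => [v | ].
  exact: sqrtr_ge0.
by eexists; exact: frob_mul_sqr_le_bigmax.
Qed.

Lemma sens_sqr_le m :
  (forall u, frakD n d Pi u -> frob (C *m u) ^+ 2 <= m) ->
  sens n d Pi C ^+ 2 <= m.
Proof.
apply: (sup_sqr_le (f := fun v => frob (C *m v))) => [v | | ].
- exact: sqrtr_ge0.
- by exists 0; exact: frakD0.
- by eexists; exact: frob_mul_sqr_le_bigmax.
Qed.

Lemma sens_sqr_le_bigmax_sum_abs :
  sens n d Pi C ^+ 2 <=
    \big[Num.max/0]_(pi in Pi) \sum_(i in pi) \sum_(j in pi) `|(C^T *m C) i j|.
Proof. exact: sens_sqr_le frob_mul_sqr_le_bigmax. Qed.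

Lemma sens_sqr_eq_bigmax_sup_mxtrace :
  sens n d Pi C ^+ 2 =
    \big[Num.max/0]_(pi in Pi)
       sup [set x | exists2 u : 'M[R]_(n, d), frakD n d Pi u &
              x = \tr ((Pmx n pi *m C^T *m C *m Pmx n pi) *m (u *m u^T))].
Proof.
pose T pi := [set x | exists2 u : 'M[R]_(n, d), frakD n d Pi u &
  x = \tr ((Pmx n pi *m C^T *m C *m Pmx n pi) *m (u *m u^T))].
have T_le pi : ubound (T pi) (sens n d Pi C ^+ 2).
  move=> _ [u Du ->]; rewrite mxtrace_PXP_gram.
  by apply: sens_sqr_ge; exact: frakD_Pmx_mul.
apply/eqP; rewrite eq_le; apply/andP; split.
  apply: sens_sqr_le => u Du; have [_ [pi pi_in supp_u]] := Du.
  apply: le_trans (le_bigmax_cond _ (fun pi => sup (T pi)) pi_in).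
  apply: ub_le_sup; first by exists (sens n d Pi C ^+ 2); exact: T_le.
  by exists u; rewrite // mxtrace_PXP_gram (Pmx_mul_id supp_u).
apply: bigmax_le => [|pi _]; first exact: sqr_ge0.
by apply: ge_sup (T_le pi); eexists; exists 0; [exact: frakD0 | ].
Qed.

Lemma sens_sqr_eq_bigmax_sum_abs : (0 < d)%N ->
  (forall pi, pi \in Pi -> forall i j : 'I_n,
     0 <= (Pmx n pi *m C^T *m C *m Pmx n pi) i j) ->
  sens n d Pi C ^+ 2 =
    \big[Num.max/0]_(pi in Pi) \sum_(i in pi) \sum_(j in pi) `|(C^T *m C) i j|.
Proof.
move=> d_gt0 PXP_ge0; apply/eqP; rewrite eq_le sens_sqr_le_bigmax_sum_abs /=.
apply: bigmax_le => [|pi pi_in]; first exact: sqr_ge0.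
have -> : \sum_(i in pi) \sum_(j in pi) `|(C^T *m C) i j| =
          \sum_(i in pi) \sum_(j in pi) (C^T *m C) i j.
  apply: eq_bigr => i i_in; apply: eq_bigr => j j_in; apply: ger0_norm.
  by have := PXP_ge0 _ pi_in i j; rewrite PXP_entry i_in j_in mul1r mulr1.
rewrite -(frob_mul_indicator_mx pi (Ordinal d_gt0) C).
by apply: sens_sqr_ge; exact: indicator_mx_in_frakD.
Qed.

End Sensitivity.

Theorem proposition3 (R : realType) (n : nat) (C : 'M[R]_n)
    (Pi : {set {set 'I_n}}) :
  Pi != finset.set0 ->
  let X := C^T *m C in
  forall d : nat,
    [/\ sens n d Pi C ^+ 2 =
          \big[Num.max/0]_(pi in Pi)
             sup [set x | exists2 u : 'M[R]_(n, d), frakD n d Pi u &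
                    x = \tr ((Pmx n pi *m C^T *m C *m Pmx n pi) *m (u *m u^T))],
        sens n d Pi C ^+ 2 <=
          \big[Num.max/0]_(pi in Pi) \sum_(i in pi) \sum_(j in pi) `|X i j|
      & (0 < d)%N ->
        (forall pi, pi \in Pi -> forall i j : 'I_n,
           0 <= (Pmx n pi *m C^T *m C *m Pmx n pi) i j) ->
        sens n d Pi C ^+ 2 =
          \big[Num.max/0]_(pi in Pi) \sum_(i in pi) \sum_(j in pi) `|X i j|].
Proof.
move=> Pi_neq0 X d; rewrite /X; split.
- exact: (sens_sqr_eq_bigmax_sup_mxtrace d C Pi_neq0).
- exact: (sens_sqr_le_bigmax_sum_abs d C Pi_neq0).
- exact: (sens_sqr_eq_bigmax_sum_abs Pi_neq0).
Qed.
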